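(* Let $X \in \mathbb{R}^{n\times p}$, let $k$ be a positive integer, let $A \in \mathbb{R}^{p\times k}$ satisfy $A^T A = I_k$, and let $\lambda, \lambda_1 > 0$. Let $B \in \mathbb{R}^{p\times k}$ be a minimizer of the convex function $$B \mapsto \|X - X B A^T\|_F^2 + \lambda \|B\|_F^2 + \lambda_1 \sum_{i=1}^p \|B_{(i)}\|_2 .$$ For $i = 1,\ldots,p$ define $b_i = \sum_{j\neq i} \big(X^{(j)T} X^{(i)}\big) B_{(j)}^T \in \mathbb{R}^{k}$. Then for each $i$, $B_{(i)} = 0$ if and only if $\|A^T X^T X^{(i)} - b_i\|_2 \le \lambda_1/2$.
   Context: For a matrix $M$, $M_{(i)}$ denotes its $i$-th row (as a row vector) and $M^{(i)}$ its $i$-th column. $\|\cdot\|_F$ is the Frobenius norm and $\|\cdot\|_2$ the Euclidean norm; $I_k$ is the $k\times k$ identity matrix. *)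

From HB Require Import structures.
From mathcomp Require Import all_boot all_order all_algebra.
From mathcomp Require Import reals.
Set Implicit Arguments. Unset Strict Implicit. Unset Printing Implicit Defensive.
Import Order.TTheory GRing.Theory Num.Theory.
Local Open Scope ring_scope.

Definition frob2 (R : realType) (m n : nat) (M : 'M[R]_(m, n)) : R :=
  \sum_(i < m) \sum_(j < n) (M i j) ^+ 2.

Definition rnorm2 (R : realType) (n : nat) (v : 'rV[R]_n) : R :=
  Num.sqrt (\sum_(j < n) (v 0 j) ^+ 2).

Definition cnorm2 (R : realType) (n : nat) (v : 'cV[R]_n) : R :=
  Num.sqrt (\sum_(i < n) (v i 0) ^+ 2).

Definition spca_obj (R : realType) (n p k : nat) (X : 'M[R]_(n, p))
    (A : 'M[R]_(p, k)) (lam lam1 : R) (B : 'M[R]_(p, k)) : R :=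
  frob2 (X - X *m B *m A^T) + lam * frob2 B
  + lam1 * \sum_(i < p) rnorm2 (row i B).

Definition bvec (R : realType) (n p k : nat) (X : 'M[R]_(n, p))
    (B : 'M[R]_(p, k)) (i : 'I_p) : 'cV[R]_k :=
  \sum_(j < p | j != i) (((col j X)^T *m col i X) 0 0) *: (row j B)^T.

From HB Require Import structures.
From mathcomp Require Import all_boot all_order all_algebra.
From mathcomp Require Import reals.
From mathcomp Require Import ring lra.
Import Order.TTheory GRing.Theory Num.Theory.
Local Open Scope ring_scope.
Set Implicit Arguments. Unset Strict Implicit. Unset Printing Implicit Defensive.

(* Perturbing only row i, B + e_i w, changes the objective by G(B_(i) + w) - G(B_(i)), where
   G(u) = K |u|^2 - 2 <u, d> + lam1 |u|, K = |X^(i)|^2 + lam, d = (A^T X^T X^(i) - b_i)^T: since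
   A^T A = I the factor A^T is an isometry, and the cross terms between row i and the other
   rows of B are exactly what b_i collects.  Hence B_(i) minimizes the group-lasso objective G,
   and 0 minimizes G iff |d| <= lam1/2.  If |d| <= lam1/2, Cauchy-Schwarz gives
   G(u) >= K |u|^2 + (lam1 - 2|d|) |u| >= K |u|^2, so only u = 0 can reach G(0) = 0; if
   |d| > lam1/2, a small step from 0 along d makes G negative. *)

Section FrobeniusInnerProduct.
Variable R : realType.
Variables m n : nat.
Implicit Types M N : 'M[R]_(m, n).

Definition fdot M N : R := \tr (M^T *m N).

Definition fnorm M : R := Num.sqrt (frob2 M).

Lemma frob2E M : frob2 M = fdot M M.
Proof.
rewrite /frob2 /fdot /mxtrace exchange_big; apply: eq_bigr => j _.
by rewrite mxE; apply: eq_bigr => l _; rewrite !mxE expr2.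
Qed.

Lemma fdotC M N : fdot M N = fdot N M.
Proof. by rewrite /fdot -mxtrace_tr trmx_mul trmxK. Qed.

Lemma fdotDr M N1 N2 : fdot M (N1 + N2) = fdot M N1 + fdot M N2.
Proof. by rewrite /fdot mulmxDr mxtraceD. Qed.

Lemma fdotDl M1 M2 N : fdot (M1 + M2) N = fdot M1 N + fdot M2 N.
Proof. by rewrite fdotC fdotDr !(fdotC N). Qed.

Lemma fdotZr a M N : fdot M (a *: N) = a * fdot M N.
Proof. by rewrite /fdot -scalemxAr mxtraceZ. Qed.

Lemma fdotZl a M N : fdot (a *: M) N = a * fdot M N.
Proof. by rewrite fdotC fdotZr fdotC. Qed.

Lemma fdotNr M N : fdot M (- N) = - fdot M N.
Proof. by rewrite -scaleN1r fdotZr mulN1r. Qed.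

Lemma fdot0l N : fdot 0 N = 0.
Proof. by rewrite -(scale0r 0) fdotZl mul0r. Qed.

Lemma frob2_0 : frob2 (0 : 'M[R]_(m, n)) = 0.
Proof. by rewrite frob2E fdot0l. Qed.

Lemma frob2D M N : frob2 (M + N) = frob2 M + 2 * fdot M N + frob2 N.
Proof. by rewrite !frob2E !(fdotDl, fdotDr) (fdotC N M); ring. Qed.

Lemma frob2_ge0 M : 0 <= frob2 M.
Proof. by apply: sumr_ge0 => i _; apply: sumr_ge0 => j _; apply: sqr_ge0. Qed.

Lemma frob2_eq0 M : frob2 M = 0 -> M = 0.
Proof.
move/eqP; rewrite psumr_eq0 => [/allP rows0|i _]; last first.
  by apply: sumr_ge0 => j _; apply: sqr_ge0.
apply/matrixP => i j; rewrite mxE; move: (rows0 i (mem_index_enum i)).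
rewrite /= psumr_eq0 => [/allP entries0|l _]; last by apply: sqr_ge0.
by apply/eqP; rewrite -sqrf_eq0; exact: entries0 (mem_index_enum j).
Qed.

Lemma sqr_fnorm M : fnorm M ^+ 2 = frob2 M.
Proof. by rewrite sqr_sqrtr // frob2_ge0. Qed.

Lemma fdot_le_fnorm M N : fdot M N <= fnorm M * fnorm N.
Proof.
have [a0|a_neq0] := eqVneq (fnorm M) 0.
  have /frob2_eq0 -> : frob2 M = 0 by rewrite -sqr_fnorm a0 expr0n.
  by rewrite fdot0l mulr_ge0 ?sqrtr_ge0.
have [b0|b_neq0] := eqVneq (fnorm N) 0.
  have /frob2_eq0 -> : frob2 N = 0 by rewrite -sqr_fnorm b0 expr0n.
  by rewrite fdotC fdot0l mulr_ge0 ?sqrtr_ge0.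
set a := fnorm M in a_neq0 *; set b := fnorm N in b_neq0 *.
have ab_gt0 : 0 < a * b by rewrite mulr_gt0 // lt_def sqrtr_ge0 ?andbT.
have := frob2_ge0 (b *: M + (- a) *: N).
rewrite frob2D !frob2E !(fdotZl, fdotZr) -!frob2E -!sqr_fnorm -/a -/b => sq_ge0.
have : a * b * fdot M N <= a * b * (a * b) by nra.
by rewrite ler_pM2l.
Qed.

Lemma fnormZ a M : fnorm (a *: M) = `|a| * fnorm M.
Proof.
rewrite /fnorm frob2E fdotZl fdotZr -frob2E mulrA -expr2.
by rewrite sqrtrM ?sqr_ge0 // sqrtr_sqr.
Qed.

Lemma frob2N M : frob2 (- M) = frob2 M.
Proof. by rewrite !frob2E fdotNr fdotC fdotNr opprK. Qed.

Lemma frob2B M N : frob2 (M - N) = frob2 M - 2 * fdot M N + frob2 N.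
Proof. by rewrite frob2D fdotNr frob2N mulrN. Qed.

End FrobeniusInnerProduct.

Section FrobeniusMulmx.
Variable R : realType.

Lemma fdot_mulmxr m q r (M : 'M[R]_(m, q)) (N : 'M[R]_(m, r)) (P : 'M[R]_(r, q)) :
  fdot M (N *m P) = fdot (M *m P^T) N.
Proof. by rewrite /fdot mulmxA mxtrace_mulC trmx_mul trmxK mulmxA. Qed.

Lemma fdot_mulmxl m q r (M : 'M[R]_(m, q)) (N : 'M[R]_(m, r)) (P : 'M[R]_(r, q)) :
  fdot M (N *m P) = fdot (N^T *m M) P.
Proof. by rewrite /fdot trmx_mul trmxK mulmxA. Qed.

Lemma frob2_mulmx_orth m q r (M : 'M[R]_(m, r)) (A : 'M[R]_(q, r)) :
  A^T *m A = 1%:M -> frob2 (M *m A^T) = frob2 M.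
Proof. by move=> AtA; rewrite !frob2E fdot_mulmxr trmxK -mulmxA AtA mulmx1. Qed.

Lemma fnorm_trmx m q (M : 'M[R]_(m, q)) : fnorm M^T = fnorm M.
Proof.
rewrite /fnorm /frob2 exchange_big; congr Num.sqrt.
by apply: eq_bigr => j _; apply: eq_bigr => l _; rewrite mxE.
Qed.

Lemma frob2_outer m q (x : 'cV[R]_m) (w : 'rV[R]_q) :
  frob2 (x *m w) = frob2 x * frob2 w.
Proof.
rewrite /frob2 big_ord1 mulr_suml; apply: eq_bigr => a _; rewrite big_ord1 mulr_sumr.
by apply: eq_bigr => b _; rewrite mxE big_ord1 exprMn.
Qed.

Lemma frob2_delta m q (i : 'I_m) (j : 'I_q) :
  frob2 (delta_mx i j : 'M[R]_(m, q)) = 1.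
Proof.
rewrite frob2E /fdot trmx_delta mul_delta_mx /mxtrace (bigD1 j) //= mxE eqxx.
by rewrite big1 ?addr0 // => l /negbTE ne_lj; rewrite mxE ne_lj.
Qed.

Lemma rnorm2E q (u : 'rV[R]_q) : rnorm2 u = fnorm u.
Proof. by rewrite /fnorm /frob2 big_ord1. Qed.

Lemma cnorm2E m (v : 'cV[R]_m) : cnorm2 v = fnorm v.
Proof.
by rewrite /fnorm /frob2; congr Num.sqrt; apply: eq_bigr => a _; rewrite big_ord1.
Qed.

End FrobeniusMulmx.

Section GroupLassoProx.
Variable R : realType.
Variables (m n : nat) (K l1 : R) (D : 'M[R]_(m, n)).

Definition group_lasso_obj (U : 'M[R]_(m, n)) : R :=
  K * frob2 U - 2 * fdot U D + l1 * fnorm U.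

Lemma group_lasso_obj0 : group_lasso_obj 0 = 0.
Proof.
by rewrite /group_lasso_obj /fnorm frob2_0 fdot0l sqrtr0 !mulr0 subrr addr0.
Qed.

Lemma group_lasso_argmin0_fnorm_le : 0 < K -> 0 <= l1 ->
  (forall U, group_lasso_obj 0 <= group_lasso_obj U) -> fnorm D <= l1 / 2.
Proof.
move=> K_gt0 l1_ge0 min0; rewrite leNgt; apply/negP => lt_l1_D.
set N := fnorm D in lt_l1_D.
have N_ge0 : 0 <= N by exact: sqrtr_ge0.
have N_gt0 : 0 < N by lra.
(* Along [D] the objective is [t N (K t N - 2 N + l1)], negative at this [t]. *)
pose t := (2 * N - l1) / (2 * K * N).
have t_gt0 : 0 < t by rewrite divr_gt0 // ?mulr_gt0 //; lra.
have KtN : K * t * N = (2 * N - l1) / 2.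
  by rewrite /t; field; rewrite !gt_eqF.
have := min0 (t *: D).
rewrite group_lasso_obj0 /group_lasso_obj fnormZ gtr0_norm // frob2E fdotZl fdotZr.
rewrite fdotZl -frob2E -sqr_fnorm -/N => obj_ge0.
have : 0 <= t * N * (K * t * N - 2 * N + l1) by nra.
by rewrite KtN; nra.
Qed.

Lemma group_lasso_argmin_eq0 V : 0 < K ->
  (forall U, group_lasso_obj V <= group_lasso_obj U) -> fnorm D <= l1 / 2 -> V = 0.
Proof.
move=> K_gt0 minV D_le.
have := minV 0; rewrite group_lasso_obj0 /group_lasso_obj => objV_le0.
have := fdot_le_fnorm V D; have := sqrtr_ge0 (frob2 V).
rewrite -/(fnorm V) => a_ge0 cs.
have frob2V_ge0 := frob2_ge0 V.
apply: frob2_eq0; apply/eqP; rewrite eq_le frob2V_ge0 andbT.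
by rewrite -(pmulr_rle0 _ K_gt0); nra.
Qed.

Lemma group_lasso_argminP V : 0 < K -> 0 <= l1 ->
  (forall U, group_lasso_obj V <= group_lasso_obj U) -> V = 0 <-> fnorm D <= l1 / 2.
Proof.
move=> K_gt0 l1_ge0 minV; split; last exact: group_lasso_argmin_eq0.
by move=> V0; apply: group_lasso_argmin0_fnorm_le => //; rewrite -V0.
Qed.

End GroupLassoProx.

Section SpcaRowUpdate.
Variables (R : realType) (n p k : nat).
Variables (X : 'M[R]_(n, p)) (B : 'M[R]_(p, k)) (i : 'I_p).

Lemma row_add_delta_mul (w : 'rV[R]_k) j :
  row j (B + delta_mx i 0 *m w) = if j == i then row i B + w else row j B.
Proof.
apply/rowP => l; rewrite !mxE big_ord1 !mxE.
have [->|ne_ji] := eqVneq j i; first by rewrite /= mul1r !mxE.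
by rewrite /= mul0r addr0 mxE.
Qed.

Lemma sum_rnorm2_row_add (w : 'rV[R]_k) :
  \sum_(j < p) rnorm2 (row j (B + delta_mx i 0 *m w)) =
  \sum_(j < p) rnorm2 (row j B) - rnorm2 (row i B) + rnorm2 (row i B + w).
Proof.
rewrite (bigD1 i) //= [in RHS](bigD1 i) //= row_add_delta_mul eqxx.
rewrite (eq_bigr (fun j => rnorm2 (row j B))) => [|j /negbTE ne_ji]; first ring.
by rewrite row_add_delta_mul ne_ji.
Qed.

Lemma colT_mulmx_bvec :
  (col i X)^T *m X *m B = (bvec X B i)^T + frob2 (col i X) *: row i B.
Proof.
have gramC j : ((col i X)^T *m X) 0 j = ((col j X)^T *m col i X) 0 0.
  by rewrite !mxE; apply: eq_bigr => a _; rewrite !mxE mulrC.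
apply/rowP => l; rewrite [in LHS]mxE (bigD1 i) //= addrC [RHS]mxE.
congr (_ + _).
  rewrite !mxE /bvec summxE; apply: eq_bigr => j _.
  by rewrite gramC !mxE.
rewrite !mxE; congr (_ * _); apply: eq_bigr => a _.
by rewrite big_ord1 !mxE expr2.
Qed.

Variables (A : 'M[R]_(p, k)) (lam lam1 : R).
Hypothesis AtA : A^T *m A = 1%:M.

Local Notation row_obj := (group_lasso_obj (frob2 (col i X) + lam) lam1
  (A^T *m X^T *m col i X - bvec X B i)^T).

Lemma spca_obj_row_update (w : 'rV[R]_k) :
  spca_obj X A lam lam1 (B + delta_mx i 0 *m w) - spca_obj X A lam lam1 B =
  row_obj (row i B + w) - row_obj (row i B).
Proof.
set x := col i X; set v := row i B; set c := frob2 x.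
set D := (A^T *m X^T *m x - bvec X B i)^T.
have resid : x^T *m (X - X *m B *m A^T) *m A = D - c *: v.
  have -> : D - c *: v = x^T *m X *m A - x^T *m X *m B.
    by rewrite colT_mulmx_bvec /D linearB /= !trmx_mul !trmxK !mulmxA opprD addrA.
  by rewrite mulmxBr mulmxBl -!mulmxA AtA mulmx1.
have fit : frob2 (X - X *m (B + delta_mx i 0 *m w) *m A^T) =
    frob2 (X - X *m B *m A^T) - 2 * fdot (D - c *: v) w + c * frob2 w.
  rewrite mulmxDr mulmxDl mulmxA -colE -/x opprD addrA frob2B.
  rewrite frob2_mulmx_orth // frob2_outer -/c fdot_mulmxr trmxK fdot_mulmxl.
  by rewrite mulmxA resid.
have ridge : frob2 (B + delta_mx i 0 *m w) = frob2 B + 2 * fdot v w + frob2 w.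
  rewrite frob2D frob2_outer frob2_delta mul1r fdot_mulmxl trmx_delta.
  by rewrite -rowE.
rewrite /spca_obj fit ridge sum_rnorm2_row_add /group_lasso_obj !rnorm2E.
rewrite (frob2D v w) fdotDl (fdotC (D - _)) (fdotDr w) (fdotNr w) (fdotZr _ w).
rewrite (fdotC w D) (fdotC w v).
ring.
Qed.

End SpcaRowUpdate.

Theorem claim1 (R : realType) (n p k : nat) (hk : (0 < k)%N)
    (X : 'M[R]_(n, p)) (A : 'M[R]_(p, k))
    (hA : A^T *m A = 1%:M)
    (lam lam1 : R) (hlam : 0 < lam) (hlam1 : 0 < lam1)
    (B : 'M[R]_(p, k))
    (hB : forall B' : 'M[R]_(p, k),
        spca_obj X A lam lam1 B <= spca_obj X A lam lam1 B')
    (i : 'I_p) :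
  row i B = 0 <->
  cnorm2 (A^T *m X^T *m col i X - bvec X B i) <= lam1 / 2.
Proof.
set K := frob2 (col i X) + lam.
set D := (A^T *m X^T *m col i X - bvec X B i)^T.
have K_gt0 : 0 < K by have := frob2_ge0 (col i X); rewrite /K; lra.
have row_min U : group_lasso_obj K lam1 D (row i B) <= group_lasso_obj K lam1 D U.
  have := hB (B + delta_mx i 0 *m (U - row i B)).
  by rewrite -subr_ge0 spca_obj_row_update // (addrC (row i B)) subrK subr_ge0.
rewrite cnorm2E -fnorm_trmx.
exact: group_lasso_argminP (ltW hlam1) row_min.
Qed.
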